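(* Let $S\colon(A,\prec_A)\to(B,\prec_B)$ be a morphism in $\mathsf{DeV^F}$ and let $b_1,b_2\in B$ with $b_1\prec_B b_2$. Then $f_S(b_1)\mathrel{S}b_2$, where $f_S(b)=\bigvee\{a\in A\mid a\mathrel{S}b\}$.
   Context: A de Vries algebra is a pair $(B,\prec)$ with $B$ a complete boolean algebra and $\prec\subseteq B\times B$ satisfying (S1) $0\prec0$, $1\prec1$; (S2) $a,b\prec c\Rightarrow(a\vee b)\prec c$; (S3) $a\prec c,d\Rightarrow a\prec(c\wedge d)$; (S4) $a\le b\prec c\le d\Rightarrow a\prec d$; (S5) $a\prec b\Rightarrow a\le b$; (S6) $a\prec b\Rightarrow\neg b\prec\neg a$; (S7) $a\prec b\Rightarrow\exists c\,(a\prec c\prec b)$; (S8) $a\ne0\Rightarrow\exists b\ne0,\ b\prec a$. A morphism $S\colon(A,\prec_A)\to(B,\prec_B)$ in $\mathsf{DeV^F}$ is a relation $S\subseteq A\times B$ satisfying (S1)–(S4) (with $S$ in place of $\prec$, left arguments in $A$, right arguments in $B$), $S\circ\prec_A=S=\prec_B\circ S$ (relational composition, $a\mathrel{(S_2\circ S_1)}c$ iff $\exists b$, $a\mathrel{S_1}b\mathrel{S_2}c$), and additionally: (F1) $a\mathrel{S}0$ implies $a=0$; (F2) whenever $b_1\prec_B b_2$ there is $a\in A$ with $\neg a\mathrel{S}\neg b_1$ and $a\mathrel{S}b_2$. *)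

(* Boolean algebras are MathComp's complemented distributive
   lattices with top and bottom (ctbDistrLatticeType); completeness is
   expressed by a supremum operator on arbitrary subsets (predicates in Prop). *)
From HB Require Import structures.
From mathcomp Require Import all_boot all_order.
Set Implicit Arguments. Unset Strict Implicit. Unset Printing Implicit Defensive.
Import Order.TTheory.
Local Open Scope order_scope.

Definition is_sup_op {d} {T : ctbDistrLatticeType d} (s : (T -> Prop) -> T) : Prop :=
  forall P : T -> Prop,
    (forall x, P x -> x <= s P) /\ (forall u, (forall x, P x -> x <= u) -> s P <= u).

Record cba := CBA {
  cba_disp : Order.disp_t;
  cba_sort :> ctbDistrLatticeType cba_disp;
  cba_sup : (cba_sort -> Prop) -> cba_sort;
  cba_supP : is_sup_op cba_sup
}.

Definition rel2 (A B : Type) := A -> B -> Prop.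

Definition rcomp {A B C : Type} (R1 : rel2 A B) (R2 : rel2 B C) : rel2 A C :=
  fun a c => exists b, R1 a b /\ R2 b c.

Definition S1to4 (A B : cba) (S : rel2 A B) : Prop :=
  [/\ S \bot \bot /\ S \top \top,
      (forall a b c, S a c -> S b c -> S (a `|` b) c),
      (forall a c d, S a c -> S a d -> S a (c `&` d)) &
      (forall a b c d, a <= b -> S b c -> c <= d -> S a d)].

Definition is_deVries (B : cba) (prec : rel2 B B) : Prop :=
  [/\ S1to4 prec,
      (forall a b, prec a b -> a <= b),
      (forall a b, prec a b -> prec (~` b) (~` a)),
      (forall a b, prec a b -> exists c, prec a c /\ prec c b) &
      (forall a, a != \bot -> exists2 b, b != \bot & prec b a)].

Definition is_DeVF_morphism (A B : cba) (precA : rel2 A A) (precB : rel2 B B)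
  (S : rel2 A B) : Prop :=
  [/\ S1to4 S,
      (forall a b, rcomp precA S a b <-> S a b),
      (forall a b, rcomp S precB a b <-> S a b),
      (forall a, S a \bot -> a = \bot) &
      (forall b1 b2, precB b1 b2 ->
         exists a, S (~` a) (~` b1) /\ S a b2)].

Definition fS (A B : cba) (S : rel2 A B) (b : B) : A :=
  cba_sup (fun a : A => S a b).

From mathcomp Require Import all_boot all_order.
Set Implicit Arguments. Unset Strict Implicit. Unset Printing Implicit Defensive.
Import Order.TTheory Order.CTBDistrLatticeTheory.
Local Open Scope order_scope.

(* F2 applied to [b1 \prec b2] yields [a] with [~` a S ~` b1] and [a S b2]; by
   (S3), (S4) and (F1) every [x S b1] is disjoint from [~` a], so [f_S(b1) <= a],
   and [f_S(b1) S b2] follows from [a S b2] by (S4). *)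

Lemma fS_le (A B : cba) (S : rel2 A B) (b : B) (a : A) :
  (forall x, S x b -> x <= a) -> fS S b <= a.
Proof. by have [_] := cba_supP (fun x : A => S x b); apply. Qed.

Section ReflectsBottom.

Variables (A B : cba) (S : rel2 A B).
Hypothesis S_S1to4 : S1to4 S.
Hypothesis S_F1 : forall a, S a \bot -> a = \bot.

Lemma rel_compl_disjoint (x y : A) (b : B) :
  S x b -> S y (~` b) -> x `&` y = \bot.
Proof.
case: S_S1to4 => _ _ S3 S4 Sxb Sy_cb; apply: S_F1; rewrite -(meetxC b).
by apply: S3; [apply: S4 Sxb _; rewrite ?leIl | apply: S4 Sy_cb _; rewrite ?leIr].
Qed.

Lemma rel_le_of_compl (x a : A) (b : B) :
  S x b -> S (~` a) (~` b) -> x <= a.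
Proof.
move=> Sxb Sca_cb; rewrite -[a]complK -disj_leC.
by apply/eqP; exact: rel_compl_disjoint Sxb Sca_cb.
Qed.

End ReflectsBottom.

Theorem lemma6p14 (A B : cba) (precA : rel2 A A) (precB : rel2 B B)
  (S : rel2 A B) :
  is_deVries precA -> is_deVries precB ->
  is_DeVF_morphism precA precB S ->
  forall b1 b2 : B, precB b1 b2 -> S (fS S b1) b2.
Proof.
move=> _ _ [S_S1to4 _ _ S_F1 S_F2] b1 b2 b1_b2.
have [a [Sca_cb1 Sa_b2]] := S_F2 _ _ b1_b2.
have fS_le_a : fS S b1 <= a.
  by apply: fS_le => x Sx_b1; exact: (rel_le_of_compl S_S1to4 S_F1 Sx_b1 Sca_cb1).
by case: S_S1to4 => _ _ _ S4; exact: S4 fS_le_a Sa_b2 (lexx b2).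
Qed.
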